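(* Let $k\ge 1$ be an integer and let $G=(V,E)$ be a $k$-intersection polished graph. Then every set $S\subseteq V$ with $|S|=k$ is contained in at most one maximal clique of $G$.
   Context: All graphs are finite and simple. For a vertex $v$, $N[v]$ denotes its closed neighbourhood (the set of neighbours of $v$ together with $v$). For an integer $k$, $P^k(G)$ is the graph on the same vertex set as $G$ in which two distinct vertices $u,v$ are adjacent if and only if $|N[u]\cap N[v]|\ge k$, the closed neighbourhoods being taken in $G$. A graph $G$ is called $k$-intersection polished if $P^k(G)=G$. A clique is a set of pairwise adjacent vertices; it is maximal if it is not properly contained in another clique. *)

From mathcomp Require Import all_boot.
Set Implicit Arguments. Unset Strict Implicit. Unset Printing Implicit Defensive.

(* A finite simple graph: vertex type T (finite), edge relation e,
   assumed symmetric and irreflexive in the theorem. *)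

Definition closed_nbhd (T : finType) (e : rel T) (v : T) : {set T} :=
  [set u | (u == v) || e v u].

Definition Pk_rel (T : finType) (e : rel T) (k : nat) : rel T :=
  fun u v => (u != v) && (k <= #|closed_nbhd e u :&: closed_nbhd e v|).

Definition intersection_polished (T : finType) (e : rel T) (k : nat) : Prop :=
  forall u v, Pk_rel e k u v = e u v.

Definition is_clique (T : finType) (e : rel T) (A : {set T}) : Prop :=
  forall u v, u \in A -> v \in A -> u != v -> e u v.

Definition is_maximal_clique (T : finType) (e : rel T) (A : {set T}) : Prop :=
  is_clique e A /\ (forall B : {set T}, is_clique e B -> A \subset B -> B = A).

From mathcomp Require Import all_boot.

Set Implicit Arguments.
Unset Strict Implicit.
Unset Printing Implicit Defensive.

(* If a k-set S lies in two maximal cliques C1 and C2, then every vertex of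
   C1 ∪ C2 has S in its closed neighbourhood, so any two such vertices share at
   least k closed neighbours and are adjacent in P^k(G) = G.  Hence C1 ∪ C2 is
   a clique, and maximality forces C1 = C1 ∪ C2 = C2. *)

Section PolishedCliques.

Variables (T : finType) (e : rel T).

Lemma clique_sub_closed_nbhd (C S : {set T}) (u : T) :
  is_clique e C -> S \subset C -> u \in C -> S \subset closed_nbhd e u.
Proof.
move=> clC sSC uC; apply/subsetP => s sS; rewrite inE.
have [-> // | neq_su] := eqVneq s u.
by apply: clC => //; [exact: (subsetP sSC) | rewrite eq_sym].
Qed.

Lemma polished_adj_of_common_nbhd (k : nat) (S : {set T}) (u v : T) :
  intersection_polished e k -> k <= #|S| -> u != v ->
  S \subset closed_nbhd e u -> S \subset closed_nbhd e v -> e u v.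
Proof.
move=> hpol kS neq_uv sSu sSv; rewrite -hpol /Pk_rel neq_uv /=.
by rewrite (leq_trans kS) // subset_leq_card // subsetI sSu.
Qed.

Lemma clique_setU_of_common_subset (k : nat) (S C1 C2 : {set T}) :
  intersection_polished e k -> k <= #|S| ->
  is_clique e C1 -> is_clique e C2 -> S \subset C1 -> S \subset C2 ->
  is_clique e (C1 :|: C2).
Proof.
move=> hpol kS cl1 cl2 sS1 sS2.
have sSN w : w \in C1 :|: C2 -> S \subset closed_nbhd e w.
  by case/setUP; exact: clique_sub_closed_nbhd.
move=> u v uC vC neq_uv.
exact: polished_adj_of_common_nbhd hpol kS neq_uv (sSN u uC) (sSN v vC).
Qed.

Lemma maximal_clique_eq_of_clique_setU (C1 C2 : {set T}) :
  is_maximal_clique e C1 -> is_maximal_clique e C2 ->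
  is_clique e (C1 :|: C2) -> C1 = C2.
Proof.
move=> [_ max1] [_ max2] clU.
by rewrite -(max1 _ clU (subsetUl _ _)) (max2 _ clU (subsetUr _ _)).
Qed.

End PolishedCliques.

Theorem mainTheorem3 (T : finType) (e : rel T) (k : nat)
  (e_sym : symmetric e) (e_irr : irreflexive e) (hk : 1 <= k)
  (hpol : intersection_polished e k)
  (S : {set T}) (hS : #|S| = k) (C1 C2 : {set T}) :
  is_maximal_clique e C1 -> is_maximal_clique e C2 ->
  S \subset C1 -> S \subset C2 -> C1 = C2.
Proof.
move=> maxC1 maxC2 sS1 sS2; apply: (maximal_clique_eq_of_clique_setU maxC1 maxC2).
apply: clique_setU_of_common_subset hpol _ maxC1.1 maxC2.1 sS1 sS2.
by rewrite hS.
Qed.
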